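(* Let $G$ be a Garside group. Then the center $Z(G)$ is cyclic if and only if any two Garside elements of $G$ are commensurable. Here ''Garside elements of $G$'' means elements $\Delta_1,\Delta_2$ arising as Garside elements of (possibly different) Garside structures $(G,G_1^+,\Delta_1)$ and $(G,G_2^+,\Delta_2)$ on the same group $G$.
   Context: An atomic monoid is a monoid $M$ generated by its atoms (elements $a\ne1$ such that $a=bc$ implies $b=1$ or $c=1$) in which, for each $a\in M$, the supremum $\|a\|$ of lengths of expressions of $a$ as a product of atoms is finite. On $M$ define $a\le_L b$ iff $ac=b$ for some $c\in M$, and $a\le_R b$ iff $ca=b$ for some $c\in M$. A Garside monoid is an atomic monoid $M$ that is left and right cancellative, such that $(M,\le_L)$ and $(M,\le_R)$ are lattices, and containing an element $\Delta$ (a Garside element) such that (a) for each $a\in M$, $a\le_L\Delta$ iff $a\le_R\Delta$, and (b) the set $\{a\in M: a\le_L\Delta\}$ is finite and generates $M$. A Garside group is the group of fractions $G$ of a Garside monoid $M$; $M$ is identified with its image $G^+\subset G$ (the positive monoid), and the triple $(G,G^+,\Delta)$ is called a Garside structure on $G$. A group may admit several Garside structures. In any Garside structure some positive power of $\Delta$ is central. Two elements $g,h$ of a group are commensurable if $g^k$ and $h^\ell$ are conjugate for some nonzero integers $k,\ell$. *)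

From Stdlib Require Import ZArith List.
Import ListNotations.
Set Implicit Arguments.

Record Group := {
  carrier :> Type;
  gmul : carrier -> carrier -> carrier;
  gone : carrier;
  ginv : carrier -> carrier;
  gmul_assoc : forall x y z, gmul x (gmul y z) = gmul (gmul x y) z;
  gmul_1l : forall x, gmul gone x = x;
  gmul_1r : forall x, gmul x gone = x;
  gmul_Vl : forall x, gmul (ginv x) x = gone;
  gmul_Vr : forall x, gmul x (ginv x) = gone
}.

Section GroupDefs.
Variable G : Group.
Local Notation "x * y" := (gmul G x y).
Local Notation "1" := (gone G).

Fixpoint gpow_nat (x : G) (n : nat) : G :=
  match n with O => 1 | S k => x * gpow_nat x k end.

Definition gpowZ (x : G) (k : Z) : G :=
  match k with
  | Z0 => 1
  | Zpos p => gpow_nat x (Pos.to_nat p)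
  | Zneg p => ginv G (gpow_nat x (Pos.to_nat p))
  end.

Definition prodl (l : list G) : G := fold_right (fun a b => a * b) 1 l.

Definition central (z : G) : Prop := forall x : G, z * x = x * z.
Definition center_cyclic : Prop :=
  exists z : G, central z /\ forall y : G, central y -> exists k : Z, y = gpowZ z k.

Definition commensurable (g h : G) : Prop :=
  exists (k l : Z) (x : G), k <> 0%Z /\ l <> 0%Z /\
    ginv G x * (gpowZ g k * x) = gpowZ h l.

Inductive gen_by (P : G -> Prop) : G -> Prop :=
  | gen_one : gen_by P 1
  | gen_el : forall a, P a -> gen_by P a
  | gen_inv : forall a, gen_by P a -> gen_by P (ginv G a)
  | gen_mul : forall a b, gen_by P a -> gen_by P b -> gen_by P (a * b).

Section Monoid.
(** [P] is (the image in G of) a candidate positive monoid M = G^+. *)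
Variable P : G -> Prop.

Definition submonoid : Prop :=
  P 1 /\ forall a b, P a -> P b -> P (a * b).

Definition leL (a b : G) : Prop := exists c, P c /\ a * c = b.
Definition leR (a b : G) : Prop := exists c, P c /\ c * a = b.

Definition atom (a : G) : Prop :=
  P a /\ a <> 1 /\ forall b c, P b -> P c -> a = b * c -> b = 1 \/ c = 1.

Definition atomic : Prop :=
  (forall a, P a -> exists l : list G, Forall atom l /\ prodl l = a) /\
  (forall a, P a -> exists N : nat, forall l : list G,
      Forall atom l -> prodl l = a -> length l <= N).

Definition is_lattice (le : G -> G -> Prop) : Prop :=
  (forall a b, P a -> P b -> exists m, P m /\ le m a /\ le m b /\
      forall c, P c -> le c a -> le c b -> le c m) /\
  (forall a b, P a -> P b -> exists j, P j /\ le a j /\ le b j /\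
      forall c, P c -> le a c -> le b c -> le j c).

Definition garside_element (D : G) : Prop :=
  P D /\
  (forall a, P a -> (leL a D <-> leR a D)) /\
  (exists l : list G, forall a, P a -> leL a D -> In a l) /\
  (forall a, P a -> exists l : list G,
      Forall (fun b => P b /\ leL b D) l /\ prodl l = a).

End Monoid.

(** A Garside structure (G, G^+, Delta) on G: G^+ is a Garside monoid with Garside
    element Delta, embedded in G, and G is its group of fractions (G^+ generates G;
    since G^+ is cancellative with common multiples, this is equivalent to G being
    the group of fractions).  Cancellativity of G^+ is automatic inside a group. *)
Definition garside_structure (P : G -> Prop) (D : G) : Prop :=
  submonoid P /\ atomic P /\ is_lattice P (leL P) /\ is_lattice P (leR P) /\
  garside_element P D /\ (forall g : G, gen_by P g).

Definition garside_group : Prop := exists P D, garside_structure P D.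

Definition is_garside_element_of_group (D : G) : Prop :=
  exists P, garside_structure P D.

End GroupDefs.

(** Let (G, G^+, Δ) be a Garside structure.  Conjugation by Δ permutes the
    finitely many simple elements (the positive left divisors of Δ), so some
    power c = Δ^N centralises every simple element, hence all of G.  Three
    consequences of this drive the proof:
    - every g ∈ G becomes positive after multiplication by a power of c;
    - every central positive element E with Δ ≤_L E is again a Garside element
      of G^+ (centrality gives balance, atomicity gives finiteness);
    - using the lattice structure, a central element with a positive power is
      positive; hence the center is torsion-free and the central roots of
      c ≠ 1 have bounded exponent.
    (⇒) If Z(G) = <z>, every Garside element has a power in <z>, so any two
    are commensurable.
    (⇐) Take a central root w of c of maximal exponent.  Any central y gives,
    up to a power of c, a central Garside element E; commensurability of Δ
    with E yields y^A = w^B with A ≠ 0, and torsion-freeness together with the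
    maximality of w force y ∈ <w>. *)

From Stdlib Require Import ZArith List Lia Classical Factorial.
Import ListNotations.

(** ** Combinatorial preliminaries *)

Lemma length_concat_repeat {A : Type} (l : list A) n :
  length (concat (repeat l n)) = Nat.mul n (length l).
Proof. induction n; simpl; auto. rewrite length_app, IHn. lia. Qed.

Lemma Forall_concat_repeat {A : Type} (Q : A -> Prop) l n :
  Forall Q l -> Forall Q (concat (repeat l n)).
Proof. intro H; induction n; simpl; auto. apply Forall_app; split; auto. Qed.

Lemma pigeonhole {A : Type} (L : list A) (f : nat -> A) :
  (forall i, i <= length L -> In (f i) L) ->
  exists a b, a < b <= length L /\ f a = f b.
Proof.
  intro Hf. apply NNPP. intro Hno.
  assert (Hnd : NoDup (map f (seq 0 (S (length L))))).
  { apply NoDup_map_NoDup_ForallPairs; [| apply seq_NoDup].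
    intros a b Ha Hb Eab. apply in_seq in Ha, Hb.
    destruct (Nat.lt_total a b) as [H|[H|H]]; auto; exfalso; apply Hno.
    - exists a, b. split; [lia | auto].
    - exists b, a. split; [lia | auto]. }
  apply NoDup_incl_length with (l' := L) in Hnd.
  - rewrite length_map, length_seq in Hnd. lia.
  - intros x Hx. apply in_map_iff in Hx. destruct Hx as [i [<- Hi]].
    apply in_seq in Hi. apply Hf. lia.
Qed.

Fixpoint words {A : Type} (L : list A) (n : nat) : list (list A) :=
  match n with
  | 0 => [[]]
  | S n => [] :: flat_map (fun x => map (cons x) (words L n)) L
  end.

Lemma words_in {A : Type} (L : list A) n l :
  (forall x, In x l -> In x L) -> length l <= n -> In l (words L n).
Proof.
  revert l; induction n; intros l H1 H2; destruct l as [|x l]; simpl in *; auto; try lia.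
  right. apply in_flat_map. exists x. split; auto.
  apply in_map, IHn; auto. lia.
Qed.

Lemma fact_div n d : 1 <= d <= n -> exists q, fact n = Nat.mul q d.
Proof.
  induction n; intro Hd; [lia |].
  destruct (Nat.eq_dec d (S n)) as [-> | Hne].
  - exists (fact n). simpl. lia.
  - destruct IHn as [q Hq]; [lia |]. exists (Nat.mul (S n) q). simpl. rewrite Hq. lia.
Qed.

Lemma bounded_max (Q : nat -> Prop) M : Q 1 -> (forall l, Q l -> l <= M) ->
  exists l0, Q l0 /\ forall l, Q l -> l <= l0.
Proof.
  intros H1 HM. apply NNPP. intro Hn.
  assert (Hs : forall l, Q l -> exists l', Q l' /\ l < l').
  { intros l Hl. apply NNPP. intro H2. apply Hn. exists l. split; auto.
    intros l' Hl'. apply NNPP. intro H3. apply H2. exists l'. split; auto. lia. }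
  assert (Hk : forall n, exists l, Q l /\ n <= l).
  { induction n.
    - exists 1. split; auto; lia.
    - destruct IHn as [l [Ql Hl]]. destruct (Hs l Ql) as [l' [Ql' Hl']].
      exists l'. split; auto. lia. }
  destruct (Hk (S M)) as [l [Ql Hl]]. specialize (HM l Ql). lia.
Qed.

(** ** Elementary group theory *)

Section GroupFacts.
Variable G : Group.
Local Notation "x * y" := (gmul G x y).
Local Notation "1" := (gone G).
Local Notation inv := (ginv G).
Local Notation pw := (gpow_nat G).
Local Notation pz := (gpowZ G).

Lemma mulA x y z : x * (y * z) = (x * y) * z. Proof. apply gmul_assoc. Qed.
Lemma mul1l x : 1 * x = x. Proof. apply gmul_1l. Qed.
Lemma mul1r x : x * 1 = x. Proof. apply gmul_1r. Qed.
Lemma mulVl x : inv x * x = 1. Proof. apply gmul_Vl. Qed.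
Lemma mulVr x : x * inv x = 1. Proof. apply gmul_Vr. Qed.

Lemma cancel_l a b c : a * b = a * c -> b = c.
Proof.
  intro H. rewrite <- (mul1l b), <- (mul1l c), <- (mulVl a), <- !mulA, H.
  reflexivity.
Qed.

Lemma cancel_r a b c : b * a = c * a -> b = c.
Proof.
  intro H. rewrite <- (mul1r b), <- (mul1r c), <- (mulVr a), !mulA, H.
  reflexivity.
Qed.

Lemma inv_uniq a b : a * b = 1 -> b = inv a.
Proof. intro H. apply (cancel_l a). rewrite H, mulVr. reflexivity. Qed.

Lemma inv_mul a b : inv (a * b) = inv b * inv a.
Proof.
  symmetry. apply inv_uniq.
  rewrite <- mulA, (mulA b), mulVr, mul1l, mulVr. reflexivity.
Qed.

Lemma inv_inv a : inv (inv a) = a.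
Proof. symmetry. apply inv_uniq, mulVl. Qed.

Lemma inv_one : inv 1 = 1.
Proof. symmetry. apply inv_uniq, mul1l. Qed.

Definition comm (x y : G) : Prop := x * y = y * x.

Lemma comm_sym x y : comm x y -> comm y x.
Proof. unfold comm; auto. Qed.

Lemma comm_one x : comm x 1.
Proof. unfold comm. rewrite mul1l, mul1r. reflexivity. Qed.

Lemma comm_mul x y z : comm x y -> comm x z -> comm x (y * z).
Proof. unfold comm; intros H1 H2. rewrite mulA, H1, <- mulA, H2, mulA. reflexivity. Qed.

Lemma comm_inv x y : comm x y -> comm x (inv y).
Proof.
  unfold comm; intro H. apply (cancel_r y). rewrite <- mulA, mulVl, mul1r.
  apply (cancel_l y). rewrite !mulA, mulVr, mul1l, H. reflexivity.
Qed.

Lemma pw_S x n : pw x (S n) = x * pw x n. Proof. reflexivity. Qed.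

Lemma pw_add x m n : pw x (m + n) = pw x m * pw x n.
Proof. induction m; simpl. - rewrite mul1l; auto. - rewrite IHm, mulA; auto. Qed.

Lemma pw_Sr x n : pw x (S n) = pw x n * x.
Proof. replace (S n) with (n + 1) by lia. rewrite pw_add. simpl. rewrite mul1r. auto. Qed.

Lemma pw_mul x m n : pw x (Nat.mul m n) = pw (pw x m) n.
Proof.
  induction n; simpl.
  - rewrite Nat.mul_0_r; auto.
  - replace (Nat.mul m (S n)) with (m + Nat.mul m n) by lia. rewrite pw_add, IHn. auto.
Qed.

Lemma pw_comm x y n : comm x y -> comm x (pw y n).
Proof. intro H; induction n; simpl. - apply comm_one. - apply comm_mul; auto. Qed.

Lemma pw_mulx x y n : comm x y -> pw (x * y) n = pw x n * pw y n.
Proof.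
  intro H; induction n; simpl.
  - rewrite mul1l; auto.
  - rewrite IHn, <- !mulA. f_equal. rewrite !mulA. f_equal.
    apply pw_comm, comm_sym, H.
Qed.

Lemma pw_one n : pw 1 n = 1.
Proof. induction n; simpl; auto. rewrite IHn, mul1l; auto. Qed.

Lemma pw_inv x n : inv (pw x n) = pw (inv x) n.
Proof.
  induction n; simpl.
  - apply inv_one.
  - rewrite inv_mul, IHn, <- pw_Sr. reflexivity.
Qed.

Lemma pz_nat x n : pz x (Z.of_nat n) = pw x n.
Proof. destruct n; simpl; auto. rewrite SuccNat2Pos.id_succ. auto. Qed.

Lemma pz_negnat x n : pz x (- Z.of_nat n) = inv (pw x n).
Proof.
  destruct n; simpl.
  - rewrite inv_one; auto.
  - rewrite SuccNat2Pos.id_succ. auto.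
Qed.

Lemma Z_cases k : (exists n, k = Z.of_nat n) \/ (exists n, k = (- Z.of_nat n)%Z).
Proof.
  destruct (Z_le_gt_dec 0 k).
  - left. exists (Z.to_nat k). lia.
  - right. exists (Z.to_nat (- k)). lia.
Qed.

Lemma pz_succ x k : pz x (Z.succ k) = pz x k * x.
Proof.
  destruct (Z_cases k) as [[n ->]|[[|n] ->]].
  - replace (Z.succ (Z.of_nat n)) with (Z.of_nat (S n)) by lia.
    rewrite !pz_nat, pw_Sr; auto.
  - simpl. rewrite mul1l, mul1r; auto.
  - replace (Z.succ (- Z.of_nat (S n))) with (- Z.of_nat n)%Z by lia.
    rewrite !pz_negnat. simpl. rewrite inv_mul, <- mulA, mulVl, mul1r. auto.
Qed.

Lemma pz_pred x k : pz x (Z.pred k) = pz x k * inv x.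
Proof. rewrite <- (Z.succ_pred k) at 2. rewrite pz_succ, <- mulA, mulVr, mul1r. auto. Qed.

Lemma pz_1 x : pz x 1 = x. Proof. simpl. apply mul1r. Qed.

Lemma pz_add x a b : pz x (a + b) = pz x a * pz x b.
Proof.
  induction b using Z.peano_ind.
  - rewrite Z.add_0_r. simpl. rewrite mul1r; auto.
  - rewrite Z.add_succ_r, !pz_succ, IHb, mulA; auto.
  - rewrite Z.add_pred_r, !pz_pred, IHb, mulA; auto.
Qed.

Lemma pz_opp x k : pz x (- k) = inv (pz x k).
Proof.
  apply inv_uniq. rewrite <- pz_add. replace (k + - k)%Z with 0%Z by lia. auto.
Qed.

Lemma pz_mul x a b : pz x (Z.mul a b) = pz (pz x a) b.
Proof.
  induction b using Z.peano_ind.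
  - rewrite Z.mul_0_r; auto.
  - rewrite Z.mul_succ_r, pz_add, pz_succ, IHb; auto.
  - rewrite Z.mul_pred_r, <- Z.add_opp_r, pz_add, pz_pred, pz_opp, IHb; auto.
Qed.

Lemma pz_comm x y k : comm x y -> comm x (pz y k).
Proof.
  intro H. induction k using Z.peano_ind.
  - apply comm_one.
  - rewrite pz_succ. apply comm_mul; auto.
  - rewrite pz_pred. apply comm_mul; auto. apply comm_inv, H.
Qed.

Lemma pz_mulx x y k : comm x y -> pz (x * y) k = pz x k * pz y k.
Proof.
  intro H. induction k using Z.peano_ind.
  - simpl. rewrite mul1l; auto.
  - rewrite !pz_succ, IHk, <- !mulA. f_equal. rewrite !mulA. f_equal.
    symmetry. apply pz_comm, H.
  - rewrite !pz_pred, IHk, inv_mul, <- !mulA. f_equal. rewrite mulA.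
    assert (Hc : comm (inv x) (pz y k * inv y)).
    { apply comm_mul.
      - apply comm_sym, comm_inv, comm_sym, pz_comm, H.
      - apply comm_sym, comm_inv, comm_sym, comm_inv, H. }
    rewrite Hc. reflexivity.
Qed.

Lemma central_comm z x : central G z -> comm z x.
Proof. unfold central, comm; auto. Qed.

Lemma comm_central z x : central G z -> comm x z.
Proof. unfold central, comm; intro H. rewrite H; auto. Qed.

Lemma central_mul a b : central G a -> central G b -> central G (a * b).
Proof. intros Ha Hb x. apply comm_sym, comm_mul; apply comm_central; auto. Qed.

Lemma central_inv a : central G a -> central G (inv a).
Proof. intros Ha x. apply comm_sym, comm_inv, comm_central, Ha. Qed.

Lemma central_pz a k : central G a -> central G (pz a k).
Proof. intros Ha x. apply comm_sym, pz_comm, comm_central, Ha. Qed.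

Lemma central_pw a k : central G a -> central G (pw a k).
Proof. intros Ha x. apply comm_sym, pw_comm, comm_central, Ha. Qed.

Lemma prodl_app l1 l2 : prodl G (l1 ++ l2) = prodl G l1 * prodl G l2.
Proof. induction l1; simpl. - rewrite mul1l; auto. - rewrite IHl1, mulA; auto. Qed.

Lemma prodl_repeat l n : prodl G (concat (repeat l n)) = pw (prodl G l) n.
Proof. induction n; simpl; auto. rewrite prodl_app, IHn. auto. Qed.

Lemma trivial_center_cyclic : (forall g : G, g = 1) -> center_cyclic G.
Proof.
  intro T. exists 1. split.
  - intro x. rewrite mul1l, mul1r. auto.
  - intros y _. exists 0%Z. apply T.
Qed.

Lemma trivial_commensurable g h : (forall g : G, g = 1) -> commensurable G g h.
Proof.
  intro T. exists 1%Z, 1%Z, 1. split; [lia | split; [lia |]].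
  rewrite (T (gpowZ G h 1)). apply T.
Qed.

Lemma commensurable_central g h : central G h -> commensurable G g h ->
  exists k l, k <> 0%Z /\ l <> 0%Z /\ pz g k = pz h l.
Proof.
  intros Hh [k [l [x [Hk [Hl Ex]]]]]. exists k, l. repeat split; auto.
  apply (cancel_r x). rewrite (central_pz h l Hh x), <- Ex, mulA, mulVr, mul1l. auto.
Qed.

Definition center_torsion_free : Prop :=
  forall u n, central G u -> 1 <= n -> pw u n = 1 -> u = 1.

Definition root_free (w : G) : Prop :=
  forall v m, central G v -> 1 <= m -> pw v m = w -> m = 1%nat.

(** An integer power of a central element equal to a root-free [w] has
    exponent ±1 (exponent 0 is excluded since 1 is not root-free). *)
Lemma root_free_exponent w v A : root_free w -> central G v -> pz v A = w ->
  A = 1%Z \/ A = (-1)%Z.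
Proof.
  intros RF Hv E.
  assert (Hone : forall u n, central G u -> pw u n = w -> n = 1%nat).
  { intros u [|n] Hu Eu.
    - simpl in Eu. exfalso.
      assert (H21 : 2 = 1%nat).
      { apply (RF 1 2); [intro x; rewrite mul1l, mul1r; auto | lia | rewrite pw_one; exact Eu]. }
      discriminate H21.
    - apply (RF u); auto; lia. }
  destruct (Z_cases A) as [[n ->]|[n ->]].
  - rewrite pz_nat in E. rewrite (Hone v n Hv E). auto.
  - rewrite pz_negnat, pw_inv in E. rewrite (Hone (inv v) n (central_inv v Hv) E). auto.
Qed.

Lemma coprime_power_relation y w A B : center_torsion_free ->
  central G y -> central G w -> A <> 0%Z -> pz y A = pz w B ->
  exists A' B', Z.gcd A' B' = 1%Z /\ pz y A' = pz w B'.
Proof.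
  intros TF Hy Hw HA E.
  set (g := Z.gcd A B).
  assert (Hg0 : g <> 0%Z) by (intro H; apply HA, (Z.gcd_eq_0_l A B), H).
  assert (Hgp : (0 < g)%Z) by (pose proof (Z.gcd_nonneg A B); unfold g in *; lia).
  destruct (Z.gcd_divide_l A B) as [A' EA]. destruct (Z.gcd_divide_r A B) as [B' EB].
  fold g in EA, EB. exists A', B'. split.
  - pose proof (Z.gcd_div_gcd A B g Hg0 eq_refl) as Hd.
    rewrite EA, EB, !Z.div_mul in Hd by auto. exact Hd.
  - set (u := pz y A' * pz w (- B')).
    assert (Hu : central G u) by (apply central_mul; apply central_pz; auto).
    assert (Eu : pw u (Z.to_nat g) = 1).
    { rewrite <- pz_nat, Z2Nat.id by lia. unfold u.
      rewrite pz_mulx by (apply central_comm, central_pz, Hy).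
      rewrite <- !pz_mul. replace (Z.mul A' g) with A by lia.
      replace (Z.mul (- B') g) with (- B)%Z by lia. rewrite E, pz_opp, mulVr. auto. }
    apply (TF u) in Eu; [| auto | lia].
    apply (cancel_r (pz w (- B'))). unfold u in Eu. rewrite Eu, <- pz_add.
    replace (B' + - B')%Z with 0%Z by lia. auto.
Qed.

(** A coprime relation y^A = w^B with w root-free puts y in <w>: by Bezout,
    w is an A-th power of a central element. *)
Lemma coprime_relation_in_cyclic y w A B : root_free w ->
  central G y -> central G w -> Z.gcd A B = 1%Z -> pz y A = pz w B ->
  exists k, y = pz w k.
Proof.
  intros RF Hy Hw Hgcd E.
  destruct (Z.gcd_bezout A B 1 Hgcd) as [u1 [v1 Hb]].
  set (v := pz w u1 * pz y v1).
  assert (Hv : central G v) by (apply central_mul; apply central_pz; auto).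
  assert (Ev : pz v A = w).
  { unfold v. rewrite pz_mulx by (apply central_comm, central_pz, Hw).
    rewrite <- !pz_mul, (Z.mul_comm v1 A), (pz_mul y A v1), E, <- !pz_mul, <- pz_add.
    replace (Z.add (Z.mul u1 A) (Z.mul B v1)) with 1%Z by lia. apply pz_1. }
  destruct (root_free_exponent w v A RF Hv Ev) as [-> | ->].
  - exists B. rewrite <- E, pz_1. auto.
  - exists (- B)%Z. rewrite pz_opp, <- E. simpl. rewrite mul1r, inv_inv. auto.
Qed.

End GroupFacts.

(** ** Garside structures: the simple elements and a central power of Δ *)

Section GarsideStructure.
Variable G : Group.
Local Notation "x * y" := (gmul G x y).
Local Notation "1" := (gone G).
Local Notation inv := (ginv G).
Local Notation pw := (gpow_nat G).
Variables (P : G -> Prop) (D : G).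
Hypothesis HS : garside_structure G P D.
Local Notation leL := (leL G P).

Lemma pos_one : P 1. Proof. apply HS. Qed.
Lemma pos_mul a b : P a -> P b -> P (a * b). Proof. apply HS. Qed.

Lemma pos_atoms a : P a -> exists l, Forall (atom G P) l /\ prodl G l = a.
Proof. apply HS. Qed.

Lemma pos_length_bound a : P a ->
  exists M, forall l, Forall (atom G P) l -> prodl G l = a -> length l <= M.
Proof. apply HS. Qed.

Lemma left_lattice : is_lattice G P leL. Proof. apply HS. Qed.
Lemma garside_D : garside_element G P D. Proof. apply HS. Qed.
Lemma pos_D : P D. Proof. apply garside_D. Qed.

Lemma pos_pw x n : P x -> P (pw x n).
Proof. intro H; induction n; simpl. - apply pos_one. - apply pos_mul; auto. Qed.

Lemma pos_prodl l : Forall P l -> P (prodl G l).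
Proof. induction 1; simpl. - apply pos_one. - apply pos_mul; auto. Qed.

Lemma garside_structure_of_element E : garside_element G P E -> garside_structure G P E.
Proof.
  intro HE. destruct HS as [H1 [H2 [H3 [H4 [_ H6]]]]].
  exact (conj H1 (conj H2 (conj H3 (conj H4 (conj HE H6))))).
Qed.

Lemma generated_ind (Q : G -> Prop) : Q 1 -> (forall a, P a -> Q a) ->
  (forall a, Q a -> Q (inv a)) -> (forall a b, Q a -> Q b -> Q (a * b)) ->
  forall g, Q g.
Proof.
  intros H1 H2 H3 H4 g. destruct HS as [_ [_ [_ [_ [_ Hgen]]]]].
  induction (Hgen g); auto.
Qed.

(** G^+ has no nontrivial invertible elements: otherwise 1 would be a
    product of arbitrarily many atoms. *)
Lemma pos_unit a b : P a -> P b -> a * b = 1 -> a = 1.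
Proof.
  intros Ha Hb Hab.
  destruct (pos_atoms a Ha) as [la [Fa Ea]]. destruct (pos_atoms b Hb) as [lb [Fb Eb]].
  destruct (pos_length_bound 1 pos_one) as [M HM].
  specialize (HM (concat (repeat (la ++ lb) (S M)))).
  rewrite prodl_repeat, length_concat_repeat, prodl_app, Ea, Eb, Hab, pw_one in HM.
  specialize (HM (Forall_concat_repeat _ _ _ (proj2 (Forall_app _ _ _) (conj Fa Fb))) eq_refl).
  rewrite length_app in HM. destruct la as [|x la].
  - simpl in Ea. auto.
  - simpl in HM. lia.
Qed.

Lemma leL_refl a : leL a a. Proof. exists 1. split; [apply pos_one | apply mul1r]. Qed.

Lemma leL_trans a b c : leL a b -> leL b c -> leL a c.
Proof.
  intros [x [Hx E1]] [y [Hy E2]]. exists (x * y). split.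
  - apply pos_mul; auto.
  - rewrite mulA, E1; auto.
Qed.

Lemma leL_mul x a b : leL a b -> leL (x * a) (x * b).
Proof. intros [y [Hy E]]. exists y. split; auto. rewrite <- mulA, E. auto. Qed.

Definition simple (s : G) : Prop := P s /\ leL s D.

Lemma simple_finite : exists Ls, forall s, simple s -> In s Ls.
Proof.
  destruct garside_D as [_ [_ [[l Hl] _]]]. exists l. intros s [H1 H2]. auto.
Qed.

Lemma simple_generate a : P a -> exists l, Forall simple l /\ prodl G l = a.
Proof. destruct garside_D as [_ [_ [_ H]]]. apply H. Qed.

Lemma simple_balanced a : P a -> leR G P a D -> leL a D.
Proof. destruct garside_D as [_ [H _]]. intros Ha Hr. apply H; auto. Qed.

Definition conjD (n : nat) (x : G) : G := inv (pw D n) * (x * pw D n).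

Lemma conjD_add i d x : conjD (i + d) x = conjD d (conjD i x).
Proof. unfold conjD. rewrite pw_add, inv_mul, !mulA. reflexivity. Qed.

Lemma conjD_inj n x y : conjD n x = conjD n y -> x = y.
Proof. unfold conjD. intro E. apply cancel_l, cancel_r in E. exact E. Qed.

Lemma conjD_fixed n x : conjD n x = x -> comm G (pw D n) x.
Proof.
  unfold conjD, comm. intro E. apply (cancel_l G (inv (pw D n))).
  rewrite mulA, mulVl, mul1l. auto.
Qed.

(** Conjugation by Δ maps simple elements to simple elements: if Δ = s t then
    Δ = t u for a positive u, and Δ^-1 s Δ = u. *)
Lemma conjD1_simple s : simple s -> simple (conjD 1 s).
Proof.
  intros [Ps [t [Pt Et]]].
  destruct (simple_balanced t Pt (ex_intro _ s (conj Ps Et))) as [u [Pu Eu]].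
  assert (Hsu : conjD 1 s = u).
  { unfold conjD. simpl. rewrite mul1r.
    assert (E : s * D = D * u) by (rewrite <- Eu at 1; rewrite mulA, Et; auto).
    rewrite E, mulA, mulVl, mul1l. auto. }
  rewrite Hsu. split; auto. apply simple_balanced; auto. exists t. auto.
Qed.

Lemma conjD_simple n s : simple s -> simple (conjD n s).
Proof.
  revert s; induction n; intros s Hs.
  - unfold conjD. simpl. rewrite inv_one, mul1l, mul1r. auto.
  - replace (S n) with (1 + n) by lia. rewrite conjD_add. apply IHn, conjD1_simple, Hs.
Qed.

(** Conjugation by Δ permutes the [length Ls] simple elements, so Δ^(length Ls)!
    commutes with each of them. *)
Lemma simple_period Ls : (forall s, simple s -> In s Ls) ->
  forall s, simple s -> comm G (pw D (fact (length Ls))) s.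
Proof.
  intros HL s Hs.
  destruct (pigeonhole Ls (fun i => conjD i s)) as [a [b [Hab E]]].
  { intros i _. apply HL, conjD_simple, Hs. }
  assert (Hfix : conjD (b - a) s = s).
  { apply (conjD_inj a). rewrite <- conjD_add. replace (b - a + a) with b by lia.
    symmetry. exact E. }
  destruct (fact_div (length Ls) (b - a)) as [q Hq]; [lia |].
  rewrite Hq, Nat.mul_comm, pw_mul.
  apply comm_sym, pw_comm, comm_sym, conjD_fixed, Hfix.
Qed.

Lemma delta_central : exists N, 1 <= N /\ central G (pw D N).
Proof.
  destruct simple_finite as [Ls HL]. exists (fact (length Ls)). split.
  { pose proof (lt_O_fact (length Ls)). lia. }
  set (c := pw D (fact (length Ls))).
  assert (Hpos : forall a, P a -> comm G c a).
  { intros a Ha. destruct (simple_generate a Ha) as [l [F <-]]. clear Ha.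
    induction F; simpl.
    - apply comm_one.
    - apply comm_mul; auto. apply simple_period; auto. }
  intro x. apply (generated_ind (fun x => comm G c x)); auto.
  - apply comm_one.
  - intros. apply comm_inv; auto.
  - intros. apply comm_mul; auto.
Qed.

(** Atoms are simple: an atom appears in any factorisation of itself. *)
Lemma atom_in_factorisation a l : atom G P a -> Forall P l -> prodl G l = a -> In a l.
Proof.
  intros Ha F. revert a Ha. induction F as [|x l Px F IHF]; intros a Ha E; simpl in *.
  - destruct Ha as [_ [H _]]. congruence.
  - destruct Ha as [Pa [Ha1 Hat]].
    destruct (Hat x (prodl G l) Px (pos_prodl l F) (eq_sym E)) as [E1|E1].
    + right. apply IHF; [exact (conj Pa (conj Ha1 Hat)) |]. rewrite <- E, E1, mul1l. auto.
    + left. rewrite <- E, E1, mul1r. auto.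
Qed.

Lemma atom_simple a : atom G P a -> simple a.
Proof.
  intro Ha. destruct (simple_generate a (proj1 Ha)) as [l [F E]].
  assert (Hin : In a l).
  { apply atom_in_factorisation; auto. eapply Forall_impl; [| exact F]. intros x [H _]; auto. }
  rewrite Forall_forall in F. auto.
Qed.

(** A central positive multiple E of Δ is again a Garside element of G^+:
    left and right divisors of E coincide by centrality, its divisors are
    words of bounded length in the finitely many atoms, and the simple
    elements, which generate G^+, divide Δ and hence E. *)
Lemma central_garside_element E : central G E -> P E -> leL D E -> garside_element G P E.
Proof.
  intros HE PE HDE. split; [auto | split; [| split]].
  - intros a Ha. split.
    + intros [x [Px Ex]]. exists x. split; auto.
      apply (cancel_l G a). rewrite mulA, Ex. apply (HE a).
    + intros [x [Px Ex]]. exists x. split; auto.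
      apply (cancel_r G a). rewrite <- mulA, Ex. symmetry. apply (HE a).
  - destruct simple_finite as [Ls HL]. destruct (pos_length_bound E PE) as [M HM].
    exists (map (prodl G) (words Ls M)). intros a Ha [b [Pb Eb]].
    destruct (pos_atoms a Ha) as [la [Fa Ea]]. destruct (pos_atoms b Pb) as [lb [Fb Eb']].
    assert (Hl : length (la ++ lb) <= M).
    { apply HM; [apply Forall_app; auto |]. rewrite prodl_app, Ea, Eb'. auto. }
    rewrite <- Ea. apply in_map, words_in.
    + intros x Hx. apply HL, atom_simple. rewrite Forall_forall in Fa. auto.
    + rewrite length_app in Hl. lia.
  - intros a Ha. destruct (simple_generate a Ha) as [l [F El]]. exists l. split; auto.
    eapply Forall_impl; [| exact F]. intros s [Ps Hs]. split; auto.
    apply leL_trans with D; auto.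
Qed.

Lemma meet_list Y : Y <> [] -> Forall P Y ->
  exists m, P m /\ (forall y, In y Y -> leL m y) /\
    (forall b, P b -> (forall y, In y Y -> leL b y) -> leL b m).
Proof.
  induction Y as [|a Y IH]; intros Hne F; [congruence |].
  inversion F as [|? ? Pa FY]; subst. destruct Y as [|a' Y'].
  - exists a. split; auto. split.
    + intros y [<-|[]]. apply leL_refl.
    + intros b _ Hb. apply Hb. left; auto.
  - destruct IH as [m' [Pm' [K1 K2]]]; [congruence | auto |].
    destruct left_lattice as [Hmeet _].
    destruct (Hmeet a m') as [m [Pm [Ma [Mm' Hm]]]]; auto.
    exists m. split; auto. split.
    + intros y [<-|Hy]; auto. apply leL_trans with m'; auto.
    + intros b Pb Hb. apply Hm; auto.
      * apply Hb; left; auto.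
      * apply K2; auto. intros y Hy. apply Hb. right; auto.
Qed.

(** Left multiplication by a positive v preserves meets: a lower bound of
    all v y lies below v m, where m is the meet of the y's.  (Pass through the
    join of v and the lower bound.) *)
Lemma meet_mul_l v m Y : P v -> Forall P Y -> P m ->
  (forall b, P b -> (forall y, In y Y -> leL b y) -> leL b m) ->
  forall b, P b -> (forall y, In y Y -> leL b (v * y)) -> leL b (v * m).
Proof.
  intros Pv FY Pm Hm b Pb Hb. rewrite Forall_forall in FY.
  destruct left_lattice as [_ Hjoin].
  destruct (Hjoin v b) as [j [Pj [[t [Pt Et]] [Bj Hj]]]]; auto.
  assert (Ht : leL t m).
  { apply Hm; auto. intros y Hy.
    assert (Hjy : leL j (v * y)).
    { apply Hj; auto. apply pos_mul; auto. exists y; auto. }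
    destruct Hjy as [x [Px Ex]]. exists x. split; auto.
    apply (cancel_l G v). rewrite mulA, Et. auto. }
  apply leL_trans with j; auto. rewrite <- Et. apply leL_mul; auto.
Qed.

End GarsideStructure.

(** ** Consequences of the centrality of c = Δ^N *)

Section CentralPower.
Variable G : Group.
Local Notation "x * y" := (gmul G x y).
Local Notation "1" := (gone G).
Local Notation inv := (ginv G).
Local Notation pw := (gpow_nat G).
Local Notation pz := (gpowZ G).
Variables (P : G -> Prop) (D : G).
Hypothesis HS : garside_structure G P D.
Variable N : nat.
Hypothesis HN : 1 <= N.
Hypothesis Hc : central G (pw D N).
Local Notation c := (pw D N).
Local Notation leL := (leL G P).

Lemma pos_c : P c. Proof. apply (pos_pw G P D HS), (pos_D G P D HS). Qed.

Lemma leL_D_c x : P x -> leL D (c * x).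
Proof.
  intro Px. exists (pw D (N - 1) * x). split.
  - apply (pos_mul G P D HS); auto. apply (pos_pw G P D HS), (pos_D G P D HS).
  - rewrite mulA, <- pw_S. f_equal. f_equal. lia.
Qed.

(** If Δ = s t then s^-1 c = t Δ^(N-1) is positive. *)
Lemma simple_inv_c s : simple G P D s -> P (inv s * c).
Proof.
  intros [Ps [t [Pt Et]]]. destruct N as [|N']; [lia |].
  rewrite pw_S. rewrite <- Et at 1. rewrite !mulA, mulVl, mul1l.
  apply (pos_mul G P D HS); auto. apply (pos_pw G P D HS), (pos_D G P D HS).
Qed.

(** Inverses of positive elements become positive after multiplication by a
    power of c (write p as a product of simple elements). *)
Lemma pos_inv_c p : P p -> exists j, P (inv p * pw c j).
Proof.
  intro Hp. destruct (simple_generate G P D HS p Hp) as [l [F <-]]. clear Hp.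
  induction F as [|x l Hx F IHF]; simpl.
  - exists 0. simpl. rewrite inv_one, mul1l. apply (pos_one G P D HS).
  - destruct IHF as [j Hj]. exists (S j).
    replace (inv (x * prodl G l) * pw c (S j))
      with ((inv (prodl G l) * pw c j) * (inv x * c)).
    + apply (pos_mul G P D HS); auto. apply simple_inv_c; auto.
    + rewrite inv_mul, pw_Sr, !mulA. f_equal. rewrite <- !mulA. f_equal.
      apply (central_pw G c j Hc).
Qed.

Lemma pos_fraction g : exists k, P (g * pw c k).
Proof.
  apply (generated_ind G P D HS (fun g => exists k, P (g * pw c k))).
  - exists 0. simpl. rewrite mul1l. apply (pos_one G P D HS).
  - intros a Ha. exists 0. simpl. rewrite mul1r. auto.
  - intros a [k Hk]. destruct (pos_inv_c _ Hk) as [j Hj]. exists j.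
    assert (E : inv a = pw c k * inv (a * pw c k)).
    { rewrite inv_mul, mulA, mulVr, mul1l. auto. }
    rewrite E, <- mulA. apply (pos_mul G P D HS); auto.
    apply (pos_pw G P D HS), pos_c.
  - intros a b [ka Ha] [kb Hb]. exists (ka + kb). rewrite pw_add.
    replace (a * b * (pw c ka * pw c kb)) with ((a * pw c ka) * (b * pw c kb)).
    + apply (pos_mul G P D HS); auto.
    + rewrite !mulA. f_equal. rewrite <- !mulA. f_equal. apply (central_pw G c ka Hc b).
Qed.

(** If c = 1 then every element is a positive unit, so G is trivial. *)
Lemma trivial_of_c_one : c = 1 -> forall g, g = 1.
Proof.
  intros E g. destruct (pos_fraction g) as [k Hk]. destruct (pos_fraction (inv g)) as [k' Hk'].
  rewrite E, pw_one, mul1r in Hk, Hk'. apply (pos_unit G P D HS g (inv g)); auto. apply mulVr.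
Qed.

(** Take C = c^K
    with v = w C positive and let m be the meet of the positive elements
    w^i C^(l-1), i < l.  Left multiplication by v shifts this family into
    C times itself, up to the positive factor w^l, so C m ≤_L v m = C m w and
    w is positive. *)
Lemma central_root_positive w l : central G w -> 1 <= l -> P (pw w l) -> P w.
Proof.
  intros Hw Hl Pwl. destruct (pos_fraction w) as [K HK].
  set (C := pw c K). assert (HC : central G C) by (apply central_pw; auto).
  set (v := w * C). set (T := pw C (l - 1)).
  set (Y := map (fun i => pw w i * T) (seq 0 l)).
  assert (FY : Forall P Y).
  { apply Forall_forall. intros y Hy. apply in_map_iff in Hy. destruct Hy as [i [<- Hi]].
    apply in_seq in Hi. unfold T. replace (l - 1) with (i + (l - 1 - i)) by lia.
    rewrite pw_add, mulA, <- pw_mulx by (apply comm_central, HC).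
    apply (pos_mul G P D HS); apply (pos_pw G P D HS); auto. apply (pos_pw G P D HS), pos_c. }
  assert (HY : forall i, i < l -> In (pw w i * T) Y).
  { intros i Hi. apply in_map_iff. exists i. split; auto. apply in_seq. lia. }
  destruct (meet_list G P D HS Y) as [m [Pm [Hm1 Hm2]]]; auto.
  { unfold Y. destruct l; [lia |]. simpl. congruence. }
  assert (Hb : leL (C * m) (v * m)).
  { apply (meet_mul_l G P D HS v m Y HK FY Pm Hm2 (C * m)).
    { apply (pos_mul G P D HS); auto. apply (pos_pw G P D HS), pos_c. }
    intros y Hy. apply in_map_iff in Hy. destruct Hy as [i [<- Hi]]. apply in_seq in Hi.
    assert (E : v * (pw w i * T) = C * (pw w (S i) * T)).
    { unfold v. rewrite <- (HC w), pw_S, !mulA. auto. }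
    rewrite E. apply (leL_mul G P).
    destruct (Nat.eq_dec (S i) l) as [<- | Hne].
    - apply (leL_trans G P D HS) with T.
      + rewrite <- (mul1l G T). apply Hm1, (HY 0). lia.
      + exists (pw w (S i)). split; auto. symmetry. apply (central_pw G w (S i) Hw T).
    - apply Hm1, HY. lia. }
  destruct Hb as [r [Pr Er]].
  assert (r = w) as <-.
  { apply (cancel_l G (C * m)). rewrite Er. unfold v. rewrite <- mulA. apply (Hw (C * m)). }
  auto.
Qed.

(** A central u with u^n = 1 has u and u^-1 positive, hence u = 1. *)
Lemma center_torsion_free_garside : center_torsion_free G.
Proof.
  intros u n Hu Hn E. apply (pos_unit G P D HS u (inv u)); [| | apply mulVr].
  - apply (central_root_positive u n); auto. rewrite E. apply (pos_one G P D HS).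
  - apply (central_root_positive (inv u) n); auto.
    + apply central_inv; auto.
    + rewrite <- pw_inv, E, inv_one. apply (pos_one G P D HS).
Qed.

(** Central roots of c ≠ 1 are positive, so their exponents are bounded by
    the maximal number of atoms in a factorisation of c. *)
Lemma root_exponent_bound : c <> 1 ->
  exists M, forall w l, central G w -> 1 <= l -> pw w l = c -> l <= M.
Proof.
  intro Hne. destruct (pos_length_bound G P D HS c pos_c) as [M HM]. exists M.
  intros w l Hw Hl E.
  assert (Pw : P w) by (apply (central_root_positive w l); auto; rewrite E; apply pos_c).
  destruct (pos_atoms G P D HS w Pw) as [[|a lw] [Fw Ew]].
  - simpl in Ew. subst. rewrite pw_one in E. congruence.
  - specialize (HM (concat (repeat (a :: lw) l))).
    rewrite length_concat_repeat, prodl_repeat, Ew in HM.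
    specialize (HM (Forall_concat_repeat _ _ _ Fw) E). simpl in HM. nia.
Qed.

(** A central root of c of maximal exponent has no proper central root. *)
Lemma maximal_central_root : c <> 1 ->
  exists w l, central G w /\ pw w l = c /\ root_free G w.
Proof.
  intro Hne. destruct root_exponent_bound as [M HM]; auto.
  destruct (bounded_max (fun l => 1 <= l /\ exists w, central G w /\ pw w l = c) M)
    as [l [[Hl [w [Hw Ew]]] Hmax]].
  - split; auto. exists c. split; auto. simpl. apply mul1r.
  - intros l [Hl [w [Hw Ew]]]. apply (HM w l); auto.
  - exists w, l. repeat split; auto. intros v m Hv Hm Ev.
    assert (Nat.mul m l <= l); [| nia].
    apply Hmax. split; [nia |]. exists v. split; auto. rewrite pw_mul, Ev. auto.
Qed.

(** If Δ is commensurable with every Garside element of G^+, then every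
    central y satisfies y^A = c^B with A ≠ 0: with y c^k positive,
    E = c y c^k is a central Garside element, and Δ^k1 = E^l1. *)
Lemma central_power_relation :
  (forall E, garside_element G P E -> commensurable G D E) ->
  forall y, central G y -> exists A B, A <> 0%Z /\ pz y A = pz c B.
Proof.
  intros Hcomm y Hy. destruct (pos_fraction y) as [k Hk].
  set (E := c * (y * pw c k)).
  assert (HE : central G E) by (apply central_mul, central_mul, central_pw; auto).
  assert (HGE : garside_element G P E).
  { apply (central_garside_element G P D HS); auto.
    - apply (pos_mul G P D HS); auto. apply pos_c.
    - apply leL_D_c, Hk. }
  destruct (commensurable_central G D E HE (Hcomm E HGE)) as [k1 [l1 [Hk1 [Hl1 Ed]]]].
  assert (Ey : E = y * pz c (Z.of_nat (S k))).
  { unfold E. rewrite pz_nat, pw_S, !mulA. f_equal. apply (Hc y). }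
  set (L := Z.mul l1 (Z.of_nat N)).
  assert (Ec : pz c k1 = pz y L * pz c (Z.mul (Z.of_nat (S k)) L)).
  { assert (EL : pz c k1 = pz E L).
    { rewrite <- (pz_nat G D N), <- pz_mul, Z.mul_comm, pz_mul, Ed, <- pz_mul. auto. }
    rewrite EL, Ey, pz_mulx, <- (pz_mul G c); auto. apply central_comm; auto. }
  exists L, (Z.sub k1 (Z.mul (Z.of_nat (S k)) L)). split.
  - unfold L. nia.
  - rewrite <- Z.add_opp_r, pz_add, Ec, pz_opp, <- mulA, mulVr, mul1r. auto.
Qed.

End CentralPower.

Section MainDirections.
Variable G : Group.
Local Notation "1" := (gone G).
Local Notation pw := (gpow_nat G).
Local Notation pz := (gpowZ G).

(** If Z(G) = <z>, the central powers Δ1^N1 = z^a and Δ2^N2 = z^b give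
    Δ1^(N1 b) = z^(ab) = Δ2^(N2 a); a = 0 or b = 0 forces G trivial. *)
Lemma commensurable_of_center_cyclic D1 D2 : center_cyclic G ->
  is_garside_element_of_group G D1 -> is_garside_element_of_group G D2 ->
  commensurable G D1 D2.
Proof.
  intros [z [Hz Hgen]] [P1 HS1] [P2 HS2].
  destruct (delta_central G P1 D1 HS1) as [N1 [HN1 Hc1]].
  destruct (delta_central G P2 D2 HS2) as [N2 [HN2 Hc2]].
  destruct (Hgen _ Hc1) as [a Ea]. destruct (Hgen _ Hc2) as [b Eb].
  destruct (Z.eq_dec a 0) as [-> | Ha].
  { apply trivial_commensurable, (trivial_of_c_one G P1 D1 HS1 N1 HN1 Hc1 Ea). }
  destruct (Z.eq_dec b 0) as [-> | Hb].
  { apply trivial_commensurable, (trivial_of_c_one G P2 D2 HS2 N2 HN2 Hc2 Eb). }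
  exists (Z.mul (Z.of_nat N1) b), (Z.mul (Z.of_nat N2) a), 1.
  split; [nia | split; [nia |]].
  rewrite inv_one, mul1l, mul1r, !pz_mul, !pz_nat, Ea, Eb, <- !pz_mul, Z.mul_comm.
  reflexivity.
Qed.

(** If
    c = 1 the group is trivial; otherwise a root-free central root w of c
    generates the center, since each central y satisfies y^A = c^B = w^(lB). *)
Lemma center_cyclic_of_commensurable P D : garside_structure G P D ->
  (forall E, garside_element G P E -> commensurable G D E) -> center_cyclic G.
Proof.
  intros HS Hcomm.
  destruct (delta_central G P D HS) as [N [HN Hc]].
  destruct (classic (pw D N = 1)) as [Hc1 | Hc1].
  { apply trivial_center_cyclic, (trivial_of_c_one G P D HS N HN Hc Hc1). }
  destruct (maximal_central_root G P D HS N HN Hc Hc1) as [w [l [Hw [Ew RF]]]].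
  exists w. split; auto. intros y Hy.
  destruct (central_power_relation G P D HS N HN Hc Hcomm y Hy) as [A [B [HA EAB]]].
  destruct (coprime_power_relation G y w A (Z.mul (Z.of_nat l) B)) as [A' [B' [Hg E']]];
    auto.
  - apply (center_torsion_free_garside G P D HS N HN Hc).
  - rewrite EAB, <- Ew, pz_mul, pz_nat. reflexivity.
  - apply (coprime_relation_in_cyclic G y w A' B'); auto.
Qed.

End MainDirections.

Theorem mainTheorem1 (G : Group) (HG : garside_group G) :
  center_cyclic G <->
  (forall D1 D2 : G, is_garside_element_of_group G D1 ->
     is_garside_element_of_group G D2 -> commensurable G D1 D2).
Proof.
  split.
  - intros Hcyc D1 D2. apply commensurable_of_center_cyclic, Hcyc.
  - intro Hcomm. destruct HG as [P [D HS]].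
    apply (center_cyclic_of_commensurable G P D HS).
    intros E HE. apply Hcomm; exists P; [exact HS |].
    apply (garside_structure_of_element G P D HS E HE).
Qed.
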